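(* Suppose that $2\le n_0<\infty$ and that $S$ is submultiplicative on $[1,n_0]$. Then there exists $\varepsilon_0>0$ such that for all $0<\varepsilon<\varepsilon_0$ the extension $S_\varepsilon$ of $S$ to $[1,n_0^2]$ defined by $$S_\varepsilon(x)=\begin{cases}S(x),&1\le x\le n_0,\\ S(n_0)+\varepsilon(x-n_0),& n_0<x\le n_0^2,\end{cases}$$ is submultiplicative on $[1,n_0^2]$.
   Context: Let $2\le n_0\le\infty$ and let $S$ be a real-valued function on $[1,n_0]$ (on $[1,\infty)$ if $n_0=\infty$). $S$ is called submultiplicative on $[1,n_0]$ if: (a) $S$ is piecewise-linear, continuous, strictly increasing and concave; (b) $S(x)=x$ for $1\le x\le 2$; (c) $S(xy)\le S(x)S(y)$ for all $x,y$ with $1\le x,y,xy\le n_0$. *)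

From Stdlib Require Import Reals Lra.
Open Scope R_scope.

Definition piecewise_linear_on (a b : R) (f : R -> R) : Prop :=
  exists (n : nat) (p : nat -> R),
    p 0%nat = a /\ p n = b /\
    (forall i, (i < n)%nat -> p i < p (S i)) /\
    (forall i, (i < n)%nat -> exists m c : R,
        forall x, p i <= x <= p (S i) -> f x = m * x + c).

Definition continuous_on_interval (a b : R) (f : R -> R) : Prop :=
  forall x, a <= x <= b -> forall eps, 0 < eps -> exists delta, 0 < delta /\
    forall y, a <= y <= b -> Rabs (y - x) < delta -> Rabs (f y - f x) < eps.

Definition strictly_increasing_on (a b : R) (f : R -> R) : Prop :=
  forall x y, a <= x <= b -> a <= y <= b -> x < y -> f x < f y.

Definition concave_on (a b : R) (f : R -> R) : Prop :=
  forall x y t, a <= x <= b -> a <= y <= b -> 0 <= t <= 1 ->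
    t * f x + (1 - t) * f y <= f (t * x + (1 - t) * y).

Definition submultiplicative_on (n0 : R) (S : R -> R) : Prop :=
  piecewise_linear_on 1 n0 S /\ continuous_on_interval 1 n0 S /\
  strictly_increasing_on 1 n0 S /\ concave_on 1 n0 S /\
  (forall x, 1 <= x <= 2 -> S x = x) /\
  (forall x y, 1 <= x -> 1 <= y -> x * y <= n0 -> S (x * y) <= S x * S y).

Definition S_ext (S : R -> R) (n0 eps : R) (x : R) : R :=
  if Rle_dec x n0 then S x else S n0 + eps * (x - n0).

(** A concave, strictly increasing, piecewise-linear [S] has every chord
    slope at least the slope [m > 0] of its last linear piece. Taking [eps0 = m / n0^2],
    the affine continuation of slope [eps < eps0] stays below the chords of [S], so
    [S_eps] remains concave, and for [n0 < x y <= n0^2] the growth [eps (x y - n0)] of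
    [S_eps] is paid for by the growth of [S] between [n0 / y] and [x], which is at
    least [m] per unit length. *)

From Stdlib Require Import Reals Lra Lia Psatz.
Open Scope R_scope.

Lemma strict_chain_le (n : nat) (p : nat -> R) :
  (forall i, (i < n)%nat -> p i < p (S i)) ->
  forall i j, (i <= j <= n)%nat -> p i <= p j.
Proof.
  intros Hp i j Hij. induction j as [|j IH].
  - replace i with 0%nat by lia. lra.
  - destruct (Nat.eq_dec i (S j)) as [->|Hne]; [lra|].
    assert (p i <= p j) by (apply IH; lia).
    assert (p j < p (S j)) by (apply Hp; lia). lra.
Qed.

Section ConcaveSlope.
Variables (a b : R) (g : R -> R).
Hypothesis Hconc : concave_on a b g.

Lemma concave_on_sub_linear (m : R) : concave_on a b (fun x => g x - m * x).
Proof. intros x y t Hx Hy Ht. pose proof (Hconc x y t Hx Hy Ht). lra. Qed.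

Lemma concave_le_of_flat_end (q : R) :
  a <= q < b -> g q = g b -> forall x, a <= x <= q -> g x <= g b.
Proof.
  intros Hq Hflat x Hx.
  set (t := (b - q) / (b - x)).
  assert (Ht : t * (b - x) = b - q) by (unfold t; field; lra).
  assert (Ht0 : 0 < t) by (unfold t; apply Rdiv_lt_0_compat; lra).
  assert (Ht1 : t <= 1) by nra.
  pose proof (Hconc x b t ltac:(lra) ltac:(lra) ltac:(lra)) as Hc.
  replace (t * x + (1 - t) * b) with q in Hc by nra.
  nra.
Qed.

Lemma concave_mono_of_max_at_end :
  (forall x, a <= x <= b -> g x <= g b) ->
  forall x y, a <= x -> x <= y -> y <= b -> g x <= g y.
Proof.
  intros Hmax x y Hx Hxy Hyb.
  destruct (Req_dec x b) as [->|Hxb]; [replace y with b by lra; lra|].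
  set (t := (b - y) / (b - x)).
  assert (Ht : t * (b - x) = b - y) by (unfold t; field; lra).
  assert (Ht0 : 0 <= t) by (unfold t; apply Rmult_le_pos; [lra|apply Rlt_le, Rinv_0_lt_compat; lra]).
  assert (Ht1 : t <= 1) by nra.
  pose proof (Hconc x b t ltac:(lra) ltac:(lra) ltac:(lra)) as Hc.
  replace (t * x + (1 - t) * b) with y in Hc by nra.
  pose proof (Hmax x ltac:(lra)). nra.
Qed.

End ConcaveSlope.

Lemma concave_increasing_pwl_slope_lb (a b : R) (f : R -> R) :
  a < b -> piecewise_linear_on a b f -> strictly_increasing_on a b f -> concave_on a b f ->
  exists m, 0 < m /\ forall x y, a <= x -> x <= y -> y <= b -> m * (y - x) <= f y - f x.
Proof.
  intros Hab [n [p [Hp0 [Hpn [Hchain Haff]]]]] Hinc Hconc.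
  destruct n as [|k]; [rewrite Hp0 in Hpn; lra|].
  destruct (Haff k (Nat.lt_succ_diag_r k)) as [m [c Hlast]].
  rewrite Hpn in Hlast.
  assert (Hq : a <= p k < b).
  { rewrite <- Hp0, <- Hpn. split; [apply (strict_chain_le (S k)); auto; lia|apply Hchain; lia]. }
  assert (Hm : 0 < m).
  { assert (Hlt : f (p k) < f b) by (apply Hinc; lra).
    rewrite !Hlast in Hlt by lra. nra. }
  exists m. split; [exact Hm|].
  set (g := fun x => f x - m * x).
  assert (Hg : concave_on a b g) by apply concave_on_sub_linear, Hconc.
  assert (Hmax : forall x, a <= x <= b -> g x <= g b).
  { intros x Hx. destruct (Rle_lt_dec (p k) x) as [Hqx|Hxq].
    - unfold g. rewrite !Hlast by lra. lra.
    - apply (concave_le_of_flat_end a b g Hg (p k)); [lra| |lra].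
      unfold g. rewrite !Hlast by lra. ring. }
  intros x y Hx Hxy Hyb.
  pose proof (concave_mono_of_max_at_end a b g Hg Hmax x y Hx Hxy Hyb) as Hmono.
  unfold g in Hmono. lra.
Qed.

Section Extension.
Variables (f : R -> R) (n0 eps : R).

Lemma S_ext_left x : x <= n0 -> S_ext f n0 eps x = f x.
Proof. intros Hx. unfold S_ext. destruct (Rle_dec x n0); [reflexivity|lra]. Qed.

Lemma S_ext_right x : n0 <= x -> S_ext f n0 eps x = f n0 + eps * (x - n0).
Proof.
  intros Hx. unfold S_ext. destruct (Rle_dec x n0); [|reflexivity].
  replace x with n0 by lra. ring.
Qed.

Lemma piecewise_linear_on_S_ext a c :
  n0 < c -> piecewise_linear_on a n0 f -> piecewise_linear_on a c (S_ext f n0 eps).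
Proof.
  intros Hc [n [p [Hp0 [Hpn [Hchain Haff]]]]].
  exists (S n), (fun i => if (i <=? n)%nat then p i else c).
  assert (Hlast : (S n <=? n)%nat = false) by (apply Nat.leb_gt; lia).
  assert (Hin : forall i, (i < n)%nat -> (i <=? n)%nat = true /\ (S i <=? n)%nat = true).
  { intros i Hi. split; apply Nat.leb_le; lia. }
  split; [exact Hp0|]. split; [rewrite Hlast; reflexivity|]. split.
  - intros i Hi. destruct (Nat.eq_dec i n) as [->|Hne].
    + rewrite Nat.leb_refl, Hlast. lra.
    + destruct (Hin i ltac:(lia)) as [-> ->]. apply Hchain. lia.
  - intros i Hi. destruct (Nat.eq_dec i n) as [->|Hne].
    + rewrite Nat.leb_refl, Hlast, Hpn.
      exists eps, (f n0 - eps * n0). intros x Hx. rewrite S_ext_right by lra. ring.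
    + destruct (Hin i ltac:(lia)) as [-> ->].
      destruct (Haff i ltac:(lia)) as [s [d Hsd]]. exists s, d. intros x Hx.
      assert (p (S i) <= p n) by (apply (strict_chain_le n p Hchain); lia).
      rewrite S_ext_left by lra. apply Hsd, Hx.
Qed.

Lemma S_ext_clamp x : S_ext f n0 eps x = f (Rmin x n0) + eps * Rmax (x - n0) 0.
Proof.
  unfold S_ext, Rmin, Rmax.
  destruct (Rle_dec x n0); destruct (Rle_dec (x - n0) 0); try lra; ring.
Qed.

Lemma Rmin_dist_le x y : Rabs (Rmin y n0 - Rmin x n0) <= Rabs (y - x).
Proof.
  unfold Rmin; destruct (Rle_dec y n0); destruct (Rle_dec x n0);
  unfold Rabs; repeat destruct Rcase_abs; lra.
Qed.

Lemma Rmax_dist_le x y : Rabs (Rmax (y - n0) 0 - Rmax (x - n0) 0) <= Rabs (y - x).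
Proof.
  unfold Rmax; destruct (Rle_dec (y - n0) 0); destruct (Rle_dec (x - n0) 0);
  unfold Rabs; repeat destruct Rcase_abs; lra.
Qed.

Lemma continuous_on_interval_S_ext a c :
  a <= n0 -> continuous_on_interval a n0 f -> continuous_on_interval a c (S_ext f n0 eps).
Proof.
  intros Han Hcont x Hx e He.
  assert (Hclamp : forall z, a <= z -> a <= Rmin z n0 <= n0).
  { intros z Hz. unfold Rmin. destruct (Rle_dec z n0); lra. }
  set (k := Rabs eps + 1).
  assert (Hk : 0 < k) by (unfold k; pose proof (Rabs_pos eps); lra).
  destruct (Hcont (Rmin x n0) (Hclamp x ltac:(lra)) (e / 2) ltac:(lra)) as [d [Hd Hfd]].
  exists (Rmin d (e / (2 * k))). split.
  { apply Rmin_pos; [lra|apply Rdiv_lt_0_compat; lra]. }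
  intros y Hy Hyx.
  pose proof (Rmin_l d (e / (2 * k))). pose proof (Rmin_r d (e / (2 * k))).
  pose proof (Hfd (Rmin y n0) (Hclamp y ltac:(lra))
                ltac:(pose proof (Rmin_dist_le x y); lra)) as Hf.
  assert (Hlin : Rabs eps * Rabs (Rmax (y - n0) 0 - Rmax (x - n0) 0) <= e / 2).
  { apply Rle_trans with (k * (e / (2 * k))); [|right; field; lra].
    apply Rmult_le_compat; try apply Rabs_pos; [unfold k; lra|].
    pose proof (Rmax_dist_le x y). lra. }
  rewrite !S_ext_clamp, <- Rabs_mult in *.
  pose proof (Rabs_triang (f (Rmin y n0) - f (Rmin x n0))
                (eps * (Rmax (y - n0) 0 - Rmax (x - n0) 0))) as Htri.
  replace (f (Rmin y n0) + eps * Rmax (y - n0) 0 - (f (Rmin x n0) + eps * Rmax (x - n0) 0))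
    with (f (Rmin y n0) - f (Rmin x n0) + eps * (Rmax (y - n0) 0 - Rmax (x - n0) 0)) by ring.
  lra.
Qed.

Lemma strictly_increasing_on_S_ext a c :
  0 < eps -> strictly_increasing_on a n0 f -> strictly_increasing_on a c (S_ext f n0 eps).
Proof.
  intros Heps Hinc x y Hx Hy Hxy.
  destruct (Rle_lt_dec y n0) as [Hyn|Hny].
  { rewrite !S_ext_left by lra. apply Hinc; lra. }
  rewrite (S_ext_right y) by lra.
  destruct (Rle_lt_dec x n0) as [Hxn|Hnx].
  - rewrite S_ext_left by lra.
    assert (f x <= f n0).
    { destruct (Req_dec x n0) as [->|]; [lra|apply Rlt_le, Hinc; lra]. }
    nra.
  - rewrite S_ext_right by lra. nra.
Qed.

End Extension.

Lemma concave_on_of_ordered (a b : R) (g : R -> R) :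
  (forall x y t, a <= x -> x <= y -> y <= b -> 0 <= t <= 1 ->
     t * g x + (1 - t) * g y <= g (t * x + (1 - t) * y)) ->
  concave_on a b g.
Proof.
  intros Hord x y t Hx Hy Ht.
  destruct (Rle_lt_dec x y) as [Hxy|Hyx]; [apply Hord; lra|].
  pose proof (Hord y x (1 - t) ltac:(lra) ltac:(lra) ltac:(lra) ltac:(lra)) as H.
  replace (1 - (1 - t)) with t in H by ring.
  replace (t * x + (1 - t) * y) with ((1 - t) * y + t * x) by ring. lra.
Qed.

Section ExtensionConcave.
Variables (f : R -> R) (n0 eps a : R).
Hypotheses (Hconc : concave_on a n0 f)
  (Hchord : forall x, a <= x <= n0 -> eps * (n0 - x) <= f n0 - f x).

Lemma S_ext_concave_across x y t :
  a <= x <= n0 -> n0 <= y -> 0 <= t <= 1 ->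
  t * S_ext f n0 eps x + (1 - t) * S_ext f n0 eps y
    <= S_ext f n0 eps (t * x + (1 - t) * y).
Proof.
  intros Hx Hy Ht. set (z := t * x + (1 - t) * y).
  rewrite (S_ext_left f n0 eps x), (S_ext_right f n0 eps y) by lra.
  pose proof (Hchord x Hx) as Hcx.
  destruct (Rle_lt_dec n0 z) as [Hnz|Hzn].
  - rewrite S_ext_right by lra. unfold z. nra.
  - (* write z = s x + (1 - s) n0; the chord bound pays for the difference t - s *)
    rewrite S_ext_left by lra.
    assert (Hxz : x <= z) by (unfold z; nra).
    assert (Hxn : x < n0) by lra.
    set (s := (n0 - z) / (n0 - x)).
    assert (Hs : s * (n0 - x) = n0 - z) by (unfold s; field; lra).
    assert (Hs0 : 0 <= s) by (unfold s; apply Rlt_le, Rdiv_lt_0_compat; lra).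
    assert (Hs1 : s <= 1) by nra.
    pose proof (Hconc x n0 s ltac:(lra) ltac:(lra) ltac:(lra)) as Hc.
    replace (s * x + (1 - s) * n0) with z in Hc by nra.
    assert (Hts : (t - s) * (n0 - x) = (1 - t) * (y - n0)) by (unfold z in Hs; nra).
    assert (0 <= t - s) by (assert (0 <= (1 - t) * (y - n0)) by nra; nra).
    assert (0 <= (t - s) * (f n0 - f x - eps * (n0 - x))) by (apply Rmult_le_pos; lra).
    assert (eps * ((t - s) * (n0 - x)) = eps * ((1 - t) * (y - n0))) by now rewrite Hts.
    nra.
Qed.

Lemma concave_on_S_ext c : concave_on a c (S_ext f n0 eps).
Proof.
  apply concave_on_of_ordered. intros x y t Hx Hxy Hyc Ht.
  destruct (Rle_lt_dec y n0) as [Hyn|Hny].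
  { assert (x * t <= y * t /\ x * (1 - t) <= y * (1 - t)) as [] by (split; nra).
    rewrite !S_ext_left by nra. apply Hconc; lra. }
  destruct (Rle_lt_dec n0 x) as [Hnx|Hxn].
  - rewrite !S_ext_right by nra. right. ring.
  - apply S_ext_concave_across; lra.
Qed.

End ExtensionConcave.

Section ExtensionSubmultiplicative.
Variables (f : R -> R) (n0 eps m : R).
Hypotheses (Hn0 : 1 <= n0) (Hf1 : f 1 = 1)
  (Hslope : forall x y, 1 <= x -> x <= y -> y <= n0 -> m * (y - x) <= f y - f x)
  (Hmul : forall x y, 1 <= x -> 1 <= y -> x * y <= n0 -> f (x * y) <= f x * f y)
  (Heps : 0 <= eps) (Heps_m : eps * (n0 * n0) <= m).

Lemma slope_nonneg : 0 <= m.
Proof. assert (0 <= eps * (n0 * n0)) by (apply Rmult_le_pos; nra). lra. Qed.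

Lemma slope_ge_one_add y : 1 <= y <= n0 -> 1 <= 1 + m * (y - 1) <= f y.
Proof.
  intros Hy. pose proof (Hslope 1 y ltac:(lra) ltac:(lra) ltac:(lra)).
  assert (0 <= m * (y - 1)) by (apply Rmult_le_pos; [apply slope_nonneg|lra]). lra.
Qed.

Lemma S_ext_mul_le_left x y :
  1 <= x <= n0 -> 1 <= y <= n0 -> n0 < x * y ->
  S_ext f n0 eps (x * y) <= S_ext f n0 eps x * S_ext f n0 eps y.
Proof.
  intros Hx Hy Hxy.
  rewrite (S_ext_right f n0 eps (x * y)), !S_ext_left by lra.
  (* compare with x' = n0 / y, where x' y = n0 lies on the boundary *)
  set (x' := n0 / y).
  assert (Hx'y : x' * y = n0) by (unfold x'; field; lra).
  assert (Hx'1 : 1 <= x') by nra.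
  assert (Hx'x : x' <= x) by nra.
  pose proof (Hmul x' y Hx'1 ltac:(lra) ltac:(lra)) as Hm. rewrite Hx'y in Hm.
  pose proof (Hslope x' x Hx'1 Hx'x ltac:(lra)).
  pose proof (slope_ge_one_add y Hy).
  assert (0 <= m * (x - x')) by (apply Rmult_le_pos; [apply slope_nonneg|lra]).
  assert (eps * y <= m)
    by (apply Rle_trans with (eps * (n0 * n0)); [apply Rmult_le_compat_l; nra|lra]).
  assert (0 <= (f x - f x') * (f y - 1)) by (apply Rmult_le_pos; nra).
  assert (0 <= (m - eps * y) * (x - x')) by (apply Rmult_le_pos; lra).
  nra.
Qed.

Lemma S_ext_mul_le_right x y :
  n0 < x -> 1 <= y <= n0 -> x * y <= n0 * n0 ->
  S_ext f n0 eps (x * y) <= S_ext f n0 eps x * S_ext f n0 eps y.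
Proof.
  intros Hx Hy Hxy.
  rewrite (S_ext_right f n0 eps (x * y)), (S_ext_right f n0 eps x), (S_ext_left f n0 eps y)
    by nra.
  pose proof (slope_ge_one_add y Hy). pose proof (slope_ge_one_add n0 ltac:(lra)).
  assert (eps * x <= m)
    by (apply Rle_trans with (eps * (n0 * n0)); [apply Rmult_le_compat_l; nra|lra]).
  assert (0 <= (f n0 + eps * (x - n0)) * (f y - 1 - m * (y - 1))) by (apply Rmult_le_pos; nra).
  assert (0 <= (f n0 + eps * (x - n0) - 1) * (m * (y - 1))) by (apply Rmult_le_pos; nra).
  assert (0 <= (m - eps * x) * (y - 1)) by (apply Rmult_le_pos; lra).
  nra.
Qed.

Lemma S_ext_mul_le x y :
  1 <= x -> 1 <= y -> x * y <= n0 * n0 ->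
  S_ext f n0 eps (x * y) <= S_ext f n0 eps x * S_ext f n0 eps y.
Proof.
  intros Hx Hy Hxy.
  destruct (Rle_lt_dec (x * y) n0) as [Hxyn|Hnxy].
  { rewrite !S_ext_left by nra. apply Hmul; lra. }
  destruct (Rle_lt_dec y n0) as [Hyn|Hny].
  - destruct (Rle_lt_dec x n0).
    + apply S_ext_mul_le_left; lra.
    + apply S_ext_mul_le_right; lra.
  - assert (x <= n0) by nra.
    rewrite Rmult_comm, (Rmult_comm (S_ext f n0 eps x)).
    apply S_ext_mul_le_right; nra.
Qed.

End ExtensionSubmultiplicative.

Lemma submultiplicative_on_S_ext (n0 eps m : R) (f : R -> R) :
  2 <= n0 -> submultiplicative_on n0 f -> 0 < eps -> eps * (n0 * n0) <= m ->
  (forall x y, 1 <= x -> x <= y -> y <= n0 -> m * (y - x) <= f y - f x) ->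
  submultiplicative_on (n0 ^ 2) (S_ext f n0 eps).
Proof.
  intros Hn0 [Hpwl [Hcont [Hinc [Hconc [Hid Hmul]]]]] Heps Heps_m Hslope.
  assert (Heps_le : eps <= m).
  { apply Rle_trans with (eps * (n0 * n0)); [|lra].
    rewrite <- (Rmult_1_r eps) at 1. apply Rmult_le_compat_l; nra. }
  assert (Hchord : forall x, 1 <= x <= n0 -> eps * (n0 - x) <= f n0 - f x).
  { intros x Hx. pose proof (Hslope x n0 ltac:(lra) ltac:(lra) ltac:(lra)).
    assert (eps * (n0 - x) <= m * (n0 - x)) by (apply Rmult_le_compat_r; lra). lra. }
  replace (n0 ^ 2) with (n0 * n0) by ring.
  split; [|split; [|split; [|split; [|split]]]].
  - apply piecewise_linear_on_S_ext; [nra|exact Hpwl].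
  - apply continuous_on_interval_S_ext; [lra|exact Hcont].
  - apply strictly_increasing_on_S_ext; assumption.
  - apply concave_on_S_ext; assumption.
  - intros x Hx. rewrite S_ext_left by lra. apply Hid, Hx.
  - apply (S_ext_mul_le f n0 eps m); try lra.
    + apply Hid; lra.
    + exact Hslope.
    + exact Hmul.
Qed.

Theorem lemma2p2 (n0 : R) (S : R -> R) :
  2 <= n0 -> submultiplicative_on n0 S ->
  exists eps0, 0 < eps0 /\
    forall eps, 0 < eps < eps0 -> submultiplicative_on (n0 ^ 2) (S_ext S n0 eps).
Proof.
  intros Hn0 Hsub.
  pose proof Hsub as [Hpwl [_ [Hinc [Hconc _]]]].
  destruct (concave_increasing_pwl_slope_lb 1 n0 S ltac:(lra) Hpwl Hinc Hconc)
    as [m [Hm Hslope]].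
  assert (Hnn : 0 < n0 * n0) by nra.
  exists (m / (n0 * n0)). split; [apply Rdiv_lt_0_compat; lra|].
  intros eps [Heps Heps0].
  apply (submultiplicative_on_S_ext n0 eps m); try assumption.
  apply Rmult_lt_compat_r with (r := n0 * n0) in Heps0; [|exact Hnn].
  replace (m / (n0 * n0) * (n0 * n0)) with m in Heps0 by (field; lra). lra.
Qed.
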